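(* Let $1,2,3,4$ be four distinct vertices of $G$ such that $G[\{1,2,3,4\}]$ has edge set exactly $\{12,23,24,34\}$ and $w_{23}\ge w_{24}$. If $\Gamma_G$ is population monotonic, then $w_{23}\ge w_{12}+w_{34}$ and $w_{23}\ge w_{24}+w_{34}$.
   Context: $G=(V,E;w)$ is a finite simple graph with edge weights $w:E\to\mathbb{R}$, $w_e>0$ for all $e\in E$; $w_{ij}$ denotes the weight of edge $ij$. The matching game on $G$ is the cooperative game $\Gamma_G=(N,\gamma)$ with player set $N=V$ and, for $S\subseteq N$, $\gamma(S)$ equal to the maximum weight of a matching in the induced subgraph $G[S]$ (so $\gamma(\emptyset)=0$). A population monotonic allocation scheme (PMAS) is a family $(\boldsymbol{x}_S)_{\emptyset\neq S\subseteq N}$ with $\boldsymbol{x}_S=(x_{S,i})_{i\in S}\in\mathbb{R}^S$ such that (efficiency) $\sum_{i\in S}x_{S,i}=\gamma(S)$ for every nonempty $S\subseteq N$, and (monotonicity) $x_{S,i}\le x_{T,i}$ whenever $\emptyset\ne S\subseteq T\subseteq N$ and $i\in S$. $\Gamma_G$ is called population monotonic if it admits a PMAS. *)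

From mathcomp Require Import all_boot all_order all_algebra.
Set Implicit Arguments. Unset Strict Implicit. Unset Printing Implicit Defensive.
Import Order.TTheory GRing.Theory Num.Theory.
Local Open Scope ring_scope.

Section Matching.
Variables (R : realFieldType) (T : finType) (e : rel T) (w : T -> T -> R).

Definition simple_graph := symmetric e /\ irreflexive e.
Definition good_weights :=
  (forall x y, w x y = w y x) /\ (forall x y, e x y -> 0 < w x y).

Definition pairs_meet (p q : T * T) : bool :=
  [|| p.1 == q.1, p.1 == q.2, p.2 == q.1 | p.2 == q.2].

(* A matching of G[S]: a set of ordered pairs (each edge listed once, as
   one orientation), each an edge with both ends in S, pairwise vertex
   disjoint. *)
Definition is_matching_in (S : {set T}) (M : {set T * T}) : bool :=
  [forall p in M, [&& e p.1 p.2, p.1 \in S & p.2 \in S]] &&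
  [forall p in M, forall q in M, (p != q) ==> ~~ pairs_meet p q].

Definition mweight (M : {set T * T}) : R := \sum_(p in M) w p.1 p.2.

(* gamma(S): maximum weight of a matching in G[S] (empty matching gives 0) *)
Definition gamma (S : {set T}) : R :=
  \big[Order.max/0]_(M : {set T * T} | is_matching_in S M) mweight M.

Definition is_PMAS (x : {set T} -> T -> R) : Prop :=
  (forall S : {set T}, S != set0 -> \sum_(i in S) x S i = gamma S) /\
  (forall (S U : {set T}) (i : T), S != set0 -> S \subset U -> i \in S ->
      x S i <= x U i).

Definition population_monotonic : Prop := exists x, is_PMAS x.

End Matching.

From mathcomp Require Import all_boot all_order all_algebra.
From mathcomp Require Import lra.
Import Order.TTheory GRing.Theory Num.Theory.
Local Open Scope ring_scope.
Set Implicit Arguments. Unset Strict Implicit.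

(* The proof rests on one inequality valid for any PMAS x: for a player z of
   a coalition A, efficiency on A and on A \ {z} together with monotonicity
   for the players of A \ {z} give the marginal bound
     x_A(z) <= gamma(A) - gamma(A \ {z}).
   Applying it to both ends of an edge uv (efficiency on {u,v}) yields
     w_uv <= [gamma(A) - gamma(A \ u)] + [gamma(B) - gamma(B \ v)]
   for all coalitions A, B containing u and v.  We use it for the edge 32
   with A = {1,2,3}, B = {2,3,4}, and for the edge 34 with A = B = {2,3,4}.
   The matching values involved are bounded below by single edges, and
   above because a matching on three vertices has at most one edge; a case
   analysis on the heaviest edge of each triple then concludes. *)

Lemma in_set3 (T : finType) (a b c : T) :
  [/\ a \in a |: (b |: [set c]), b \in a |: (b |: [set c]) & c \in a |: (b |: [set c])].
Proof. by rewrite !inE !eqxx !orbT. Qed.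

Section MatchingValue.
Variables (R : realFieldType) (T : finType) (e : rel T) (w : T -> T -> R).

Lemma matching_edge (S : {set T}) (M : {set T * T}) (p : T * T) :
  is_matching_in e S M -> p \in M -> [&& e p.1 p.2, p.1 \in S & p.2 \in S].
Proof. by case/andP=> /forall_inP edgeM _ /edgeM. Qed.

Lemma matching_disjoint (S : {set T}) (M : {set T * T}) (p q : T * T) :
  is_matching_in e S M -> p \in M -> q \in M -> p != q -> ~~ pairs_meet p q.
Proof.
by case/andP=> _ /forall_inP disjM /disjM /forall_inP dp /dp /implyP.
Qed.

Lemma gamma_ge (S : {set T}) (M : {set T * T}) :
  is_matching_in e S M -> mweight w M <= gamma e w S.
Proof.
move=> matchM; rewrite /gamma -big_filter.
have : M \in [seq N <- index_enum {set T * T} | is_matching_in e S N].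
  by rewrite mem_filter matchM mem_index_enum.
elim: [seq _ <- _ | _] => // N s IHs; rewrite inE big_cons le_max.
by case/orP=> [/eqP <-|/IHs ->]; rewrite ?lexx ?orbT.
Qed.

Lemma gamma_le (S : {set T}) (k : R) :
  0 <= k -> (forall M, is_matching_in e S M -> mweight w M <= k) ->
  gamma e w S <= k.
Proof.
move=> k_ge0 boundM; apply: (big_ind (fun y => y <= k)) => // y z yk zk.
by rewrite ge_max yk zk.
Qed.

(* A single edge inside S is a matching of G[S], so gamma(S) >= w_uv. *)
Lemma gamma_ge_edge (S : {set T}) (u v : T) :
  e u v -> u \in S -> v \in S -> w u v <= gamma e w S.
Proof.
move=> euv uS vS; have <- : mweight w [set (u, v)] = w u v by rewrite /mweight big_set1.
apply: gamma_ge; apply/andP; split; apply/forall_inP => p; rewrite inE => /eqP -> /=.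
  by rewrite euv uS vS.
by apply/forall_inP => q; rewrite inE => /eqP ->; rewrite eqxx.
Qed.

Lemma gamma_minus_ge_edge (S : {set T}) (u v z : T) :
  e u v -> u != z -> v != z -> u \in S -> v \in S -> w u v <= gamma e w (S :\ z).
Proof.
by move=> euv uz vz uS vS; apply: gamma_ge_edge euv _ _; rewrite !inE ?uz ?vz.
Qed.

Hypothesis irr_e : irreflexive e.

(* Two distinct edges of a matching span four distinct vertices, so a
   matching on at most three vertices has at most one edge. *)
Lemma small_matching_card (S : {set T}) (M : {set T * T}) :
  (#|S| <= 3)%N -> is_matching_in e S M -> (#|M| <= 1)%N.
Proof.
move=> cardS matchM; rewrite leqNgt; apply/negP => /card_gt1P[p [q [pM qM pq]]].
have /and3P[ep p1S p2S] := matching_edge matchM pM.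
have /and3P[eq_ q1S q2S] := matching_edge matchM qM.
have := matching_disjoint matchM pM qM pq.
rewrite /pairs_meet !negb_or => /and4P[pq11 pq12 pq21 pq22].
have uniq4 : uniq [:: p.1; p.2; q.1; q.2].
  have p12 : p.1 != p.2 by apply: contraTneq ep => ->; rewrite irr_e.
  have q12 : q.1 != q.2 by apply: contraTneq eq_ => ->; rewrite irr_e.
  by rewrite /= !inE !negb_or p12 q12 pq11 pq12 pq21 pq22.
have : (size [:: p.1; p.2; q.1; q.2] <= #|S|)%N.
  rewrite cardE; apply: uniq_leq_size uniq4 _ => y.
  by rewrite !inE mem_enum => /or4P[] /eqP ->.
by move/leq_trans/(_ cardS).
Qed.

Lemma gamma_small_le (S : {set T}) (k : R) :
  (#|S| <= 3)%N -> 0 <= k ->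
  (forall u v, u \in S -> v \in S -> e u v -> w u v <= k) -> gamma e w S <= k.
Proof.
move=> cardS k_ge0 boundE; apply: gamma_le => // M matchM.
have [->|[p pM]] := set_0Vmem M; first by rewrite /mweight big_set0.
have -> : M = [set p].
  apply/eqP; rewrite eq_sym eqEcard sub1set pM cards1.
  exact: small_matching_card matchM.
rewrite /mweight big_set1.
by have /and3P[ep p1S p2S] := matching_edge matchM pM; apply: boundE.
Qed.

Hypothesis sym_e : symmetric e.
Hypothesis sym_w : forall u v, w u v = w v u.

Lemma gamma_triple_le (a b c : T) (k : R) :
  0 <= k -> (e a b -> w a b <= k) -> (e b c -> w b c <= k) ->
  (e a c -> w a c <= k) -> gamma e w (a |: (b |: [set c])) <= k.
Proof.
move=> k_ge0 hab hbc hac; apply: gamma_small_le => //.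
  by rewrite !cardsU1 cards1 addnA (leq_add (leq_add (leq_b1 _) (leq_b1 _))).
move=> u v; rewrite !inE => /or3P[]/eqP-> /or3P[]/eqP-> euv;
first [ by rewrite irr_e in euv | exact: hab euv | exact: hbc euv
      | exact: hac euv | by rewrite sym_w; apply: hab; rewrite sym_e
      | by rewrite sym_w; apply: hbc; rewrite sym_e
      | by rewrite sym_w; apply: hac; rewrite sym_e ].
Qed.

End MatchingValue.

Section MarginalBounds.
Variables (R : realFieldType) (T : finType) (e : rel T) (w : T -> T -> R).
Variable x : {set T} -> T -> R.
Hypothesis pmas_x : is_PMAS e w x.

Local Notation gamma := (gamma e w).

(* The share of z in A is at most its marginal contribution to A: the other
   players of A already receive at least gamma(A \ z) in total. *)
Lemma pmas_marginal (A : {set T}) (z : T) :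
  z \in A -> A :\ z != set0 -> x A z <= gamma A - gamma (A :\ z).
Proof.
have [eff mono] := pmas_x; move=> zA Az0.
have A0 : A != set0 by apply/set0Pn; exists z.
rewrite -(eff A A0) (big_setD1 _ zA) /= -(eff _ Az0) -addrA lerDl subr_ge0.
by apply: ler_sum => i iAz; apply: mono => //; apply: subD1set.
Qed.

(* Edge inequality: the pair {u,v} needs w_uv, which is split between the
   two endpoints, each getting at most its marginal contribution to any
   coalition containing the edge. *)
Lemma pmas_edge_marginals (A B : {set T}) (u v : T) :
  e u v -> u != v -> u \in A -> v \in A -> u \in B -> v \in B ->
  w u v <= (gamma A - gamma (A :\ u)) + (gamma B - gamma (B :\ v)).
Proof.
have [eff mono] := pmas_x; move=> euv uv uA vA uB vB.
set P := u |: [set v].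
have uP : u \in P by rewrite !inE eqxx.
have vP : v \in P by rewrite !inE eqxx orbT.
have P0 : P != set0 by apply/set0Pn; exists u.
have Au0 : A :\ u != set0 by apply/set0Pn; exists v; rewrite !inE eq_sym uv.
have Bv0 : B :\ v != set0 by apply/set0Pn; exists u; rewrite !inE uv.
have effP : x P u + x P v = gamma P.
  by rewrite -(eff P P0) big_setU1 ?big_set1 //= inE.
have xu : x P u <= gamma A - gamma (A :\ u).
  by apply: le_trans (pmas_marginal uA Au0); apply: mono; rewrite // subUset !sub1set uA.
have xv : x P v <= gamma B - gamma (B :\ v).
  by apply: le_trans (pmas_marginal vB Bv0); apply: mono; rewrite // subUset !sub1set uB.
by rewrite (le_trans (gamma_ge_edge w euv uP vP)) // -effP lerD.
Qed.

End MarginalBounds.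

Lemma heaviest_middle_edge (R : realFieldType) (a b c d g1 g2 : R) :
  0 < a -> 0 < b -> 0 < d -> c <= b ->
  g1 <= Num.max a b -> g2 <= Num.max b d ->
  b <= (g1 - a) + (g2 - d) -> d <= (g2 - c) + (g2 - b) ->
  a + d <= b /\ c + d <= b.
Proof.
by move=> a0 b0 d0 cb; case: (leP a b) => ab; case: (leP b d) => bd *; lra.
Qed.

Theorem mainTheorem6 (R : realFieldType) (T : finType) (e : rel T)
  (w : T -> T -> R) (v1 v2 v3 v4 : T) :
  simple_graph e -> good_weights e w ->
  uniq [:: v1; v2; v3; v4] ->
  e v1 v2 -> e v2 v3 -> e v2 v4 -> e v3 v4 ->
  ~~ e v1 v3 -> ~~ e v1 v4 ->
  w v2 v4 <= w v2 v3 ->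
  population_monotonic e w ->
  w v1 v2 + w v3 v4 <= w v2 v3 /\ w v2 v4 + w v3 v4 <= w v2 v3.
Proof.
move=> [sym irr] [wsym wpos] + e12 e23 e24 e34 no_e13 _ w24_le [x pmas].
rewrite /= !inE !negb_or => /and4P[/and3P[_ neq13 _] /andP[neq23 neq24] neq34 _].
have [neq32 neq42 neq43] : [/\ v3 != v2, v4 != v2 & v4 != v3] by rewrite !(eq_sym v4) eq_sym.
set S123 := v1 |: (v2 |: [set v3]); set S234 := v2 |: (v3 |: [set v4]).
have [in1 in2 in3] := in_set3 v1 v2 v3; have [in2' in3' in4'] := in_set3 v2 v3 v4.
have w12_gt0 := wpos _ _ e12; have w23_gt0 := wpos _ _ e23.
have w34_gt0 := wpos _ _ e34.
(* Upper bounds: each triple spans no two disjoint edges. *)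
have g123_le : gamma e w S123 <= Num.max (w v1 v2) (w v2 v3).
  apply: gamma_triple_le => //; rewrite ?le_max ?lexx ?orbT ?(negbTE no_e13) //.
  by rewrite ltW.
have g234_le : gamma e w S234 <= Num.max (w v2 v3) (w v3 v4).
  apply: gamma_triple_le => //; rewrite ?le_max ?lexx ?w24_le ?orbT //.
  by rewrite ltW.
(* Lower bounds: the pairs left after removing one vertex still span an edge. *)
have g12_ge := gamma_minus_ge_edge w e12 neq13 neq23 in1 in2.
have g34_ge := gamma_minus_ge_edge w e34 neq32 neq42 in3' in4'.
have g24_ge := gamma_minus_ge_edge w e24 neq23 neq43 in2' in4'.
have g23_ge := gamma_minus_ge_edge w e23 neq24 neq34 in2' in3'.
have edge32 := pmas_edge_marginals pmas (etrans (sym _ _) e23) neq32 in3 in2 in3' in2'.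
have edge34 := pmas_edge_marginals pmas e34 neq34 in3' in4' in3' in4'.
rewrite (wsym v3 v2) in edge32.
have [] // := heaviest_middle_edge w12_gt0 w23_gt0 w34_gt0 w24_le g123_le g234_le.
  by lra.
by lra.
Qed.
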